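(* Let $R>0$, let $f\in C_0^\infty(\mathbb{R})$ with $\operatorname{supp}f\subseteq[-R,R]$, and let $g$ be a locally integrable function on $\mathbb{R}$ such that $|g|$ vanishes monotonically at infinity (i.e. $|g(x)|\to0$ as $|x|\to\infty$, with $|g|$ increasing on some half-line $(-\infty,-c]$ and decreasing on some half-line $[c,\infty)$). For $L>0$ define, for $x\in[-L/2,L/2]$, $$h(x):=(f*_Lg-f*_\infty g)(x).$$ Then, with $M:=R\max|f|$, for all sufficiently large $L$: $$h(x)\ \begin{cases}\le M\big(|g(-L/2)|+|g(L/2-R)|\big) & \text{for } x\in[-L/2,-L/2+R),\\ =0 & \text{for } x\in[-L/2+R,\,L/2-R],\\ \le M\big(|g(L/2)|+|g(-L/2+R)|\big) & \text{for } x\in(L/2-R,\,L/2].\end{cases}$$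
   Context: For a function $u$ on $\mathbb{R}$, its periodic restriction $u^{(L)}$ is the $L$-periodic function on $\mathbb{R}$ that coincides with $u$ on $[-L/2,L/2)$. The torus convolution is $(f*_Lg)(x):=\int_{-L/2}^{L/2}f^{(L)}(y)\,g^{(L)}(x-y)\,dy=\int_{-L/2}^{L/2}f(y)\,g^{(L)}(x-y)\,dy$, and $*_\infty$ is the ordinary convolution on $\mathbb{R}$: $(f*_\infty g)(x)=\int_{\mathbb{R}}f(y)g(x-y)\,dy$. *)

From HB Require Import structures.
From mathcomp Require Import all_boot all_order all_algebra.
From mathcomp Require Import all_classical all_reals all_analysis.
Set Implicit Arguments. Unset Strict Implicit. Unset Printing Implicit Defensive.
Import Order.TTheory GRing.Theory Num.Theory.
Import numFieldNormedType.Exports.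
Local Open Scope classical_set_scope.
Local Open Scope ring_scope.

Section Defs.
Variable R : realType.

(* periodic restriction u^(L): the L-periodic function agreeing with u on [-L/2, L/2) *)
Definition per_restr (L : R) (u : R -> R) (x : R) : R :=
  u (x - L * (Num.floor ((x + L / 2) / L))%:~R).

Definition torus_conv (L : R) (f g : R -> R) (x : R) : R :=
  Rintegral lebesgue_measure `[- (L / 2), L / 2]
    (fun y => per_restr L f y * per_restr L g (x - y)).

Definition line_conv (f g : R -> R) (x : R) : R :=
  Rintegral lebesgue_measure [set: R] (fun y => f y * g (x - y)).

Definition smooth (f : R -> R) : Prop :=
  forall (n : nat) (x : R), derivable (derive1n n f) x 1.

Definition supp_in (f : R -> R) (R0 : R) : Prop :=
  closure [set x | f x != 0] `<=` `[- R0, R0].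

Definition vanishes_monotonically (g : R -> R) : Prop :=
  ((fun x => `|g x|) x @[x --> +oo] --> (0 : R)) /\
  ((fun x => `|g x|) x @[x --> -oo] --> (0 : R)) /\
  exists c : R,
    (forall x y, x <= y -> y <= - c -> `|g x| <= `|g y|) /\
    (forall x y, c <= x -> x <= y -> `|g y| <= `|g x|).

Definition supnorm (f : R -> R) : R := sup (range (fun x => `|f x|)).

End Defs.

From HB Require Import structures.
From mathcomp Require Import all_boot all_order all_algebra.
From mathcomp Require Import all_classical all_reals all_analysis.
From mathcomp Require Import lra ring measurable_realfun.
Import Order.TTheory GRing.Theory Num.Theory.
Import numFieldNormedType.Exports.
Local Open Scope classical_set_scope.
Local Open Scope ring_scope.
Set Implicit Arguments. Unset Strict Implicit.

(* Since f vanishes outside (-R0, R0), both convolutions only see g (x - y)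
   for |y| < R0, and once R0 < L/2 the torus convolution is the integral over
   the line of f y * g^(L) (x - y).  In the middle range x - y stays in
   [-L/2, L/2), where g^(L) = g, so h vanishes.  Near either end, g^(L) (x - y)
   differs from g (x - y) only on a set of y of length at most R0, where x - y
   has crossed -L/2 (resp. L/2) and g^(L) is g shifted by L (resp. -L); there
   the monotonicity of |g| on the tails bounds both |g (x - y)| and the shifted
   value by the endpoint values in the statement, and |f| <= supnorm f. *)

Lemma smooth_continuous (R : realType) (f : R -> R) : smooth f -> continuous f.
Proof.
move=> sf x; apply: differentiable_continuous; apply/derivable1_diffP.
exact: (sf 0%N x).
Qed.

Lemma supp_in_eq0 (R : realType) (f : R -> R) (R0 y : R) :
  continuous f -> supp_in f R0 -> R0 <= `|y| -> f y = 0.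
Proof.
move=> cf sf; apply: contraTeq => fy0; rewrite -ltNge ltr_norml.
have nz_open : open [set z | f z != 0].
  apply: (@open_comp _ _ f [set r | r != 0]) => [z _|]; first exact: cf.
  exact: open_neq.
have : [set z | f z != 0]° y by rewrite (interior_id _).1.
move/(interiorS (subset_trans (@subset_closure _ _) sf)).
by rewrite (@interior_itv_bnd _ _ _ true false) /= in_itv.
Qed.

Lemma normr_le_supnorm (R : realType) (f : R -> R) (R0 y : R) :
  0 <= R0 -> continuous f -> supp_in f R0 -> `|f y| <= supnorm f.
Proof.
move=> R0_ge0 cf sf.
have normf_cont : continuous (fun y => `|f y|).
  by move=> x; apply: continuous_comp; [exact: cf | exact: norm_continuous].
have [c _ c_max] := @EVT_max R (fun y => `|f y|) (- R0) R0 ltac:(lra)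
  (continuous_subspaceT normf_cont).
have ub z : `|f z| <= `|f c|.
  have [zin|zout] := boolP (z \in `[- R0, R0]); first exact: c_max.
  rewrite (supp_in_eq0 cf sf) ?normr0 //.
  by move: zout; rewrite in_itv /= -ler_norml -ltNge => /ltW.
apply: ub_le_sup; last by exists y.
by exists `|f c| => _ [z _ <-]; exact: ub.
Qed.

Lemma measurable_reflect (R : realType) (x : R) :
  measurable_fun setT (fun y : R => x - y).
Proof. exact: (measurable_funB (measurable_cst x) (@measurable_id _ _ setT)). Qed.

(* The pushforward is a measure only given the measurability of the map, so
   this instance cannot be inferred. *)
Definition reflected_lebesgue_measure (R : realType) (x : R) :=
  @measure_function_pushforward__canonical__measure_function_Measure
    _ _ _ (measurableTypeR R) R lebesgue_measure _ (measurable_reflect x).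

Lemma lebesgue_measure_reflect (R : realType) (x : R) (A : set R) :
  measurable A ->
  lebesgue_measure ((fun y : R => x - y) @^-1` A) = lebesgue_measure A.
Proof.
move=> mA.
rewrite [RHS](@lebesgue_measure_unique R (reflected_lebesgue_measure x) _ A mA) //.
move=> _ [[a b] _ <-] /=; rewrite /pushforward.
have -> : (fun y => x - y) @^-1` `]a, b]%classic = `[x - b, x - a[%classic.
  by apply/seteqP; split => y /=; rewrite !in_itv /= => /andP[? ?];
    apply/andP; split; lra.
rewrite !lebesgue_measure_itv /= !lte_fin.
have -> : (x - b < x - a) = (a < b) by apply/idP/idP => ?; lra.
by case: ifP => // _; rewrite -EFinD; congr EFin; lra.
Qed.

Lemma ge0_integral_reflect (R : realType) (x : R) (D : set R) (h : R -> \bar R) :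
  measurable D -> measurable_fun D h -> (forall z, D z -> (0 <= h z)%E) ->
  (\int[lebesgue_measure]_(y in (fun y : R => (x - y)%R) @^-1` D) h (x - y)%R =
   \int[lebesgue_measure]_(z in D) h z)%E.
Proof.
move=> mD mh h0.
rewrite -(@ge0_integral_pushforward _ _ (measurableTypeR R) (measurableTypeR R) R
  _ (measurable_reflect x) lebesgue_measure D h) //; last first.
  by move=> z /[!inE]; exact: h0.
apply: (@eq_measure_integral _ (measurableTypeR R) R D lebesgue_measure
  (reflected_lebesgue_measure x)) => A mA _.
exact: lebesgue_measure_reflect.
Qed.

Lemma integrable_conv (R : realType) (f g : R -> R) (R0 x : R) :
  0 <= R0 -> continuous f -> supp_in f R0 -> locally_integrable setT g ->
  lebesgue_measure.-integrable setT (EFin \o (fun y => f y * g (x - y))).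
Proof.
move=> R0_ge0 cf sf [mg _ lig].
have mgx : measurable_fun setT (fun y : R => g (x - y)).
  exact: measurableT_comp mg (measurable_reflect x).
have mF : measurable_fun setT (fun y : R => f y * g (x - y)).
  exact: measurable_funM (continuous_measurable_fun cf) mgx.
apply/integrableP; split; first exact/measurable_EFinP.
set D := `[- R0, R0]%classic.
have mD : measurable D by exact: measurable_itv.
have -> : (\int[lebesgue_measure]_(y in setT) `|f y * g (x - y)|%:E =
    \int[lebesgue_measure]_(y in D) `|f y * g (x - y)|%:E)%E.
  rewrite [RHS]integral_mkcond; apply: eq_integral => y _.
  rewrite /patch; case: ifPn => // yD.
  rewrite (supp_in_eq0 cf sf) ?mul0r ?normr0 //.
  move: yD; rewrite notin_setE /D /= in_itv /= -ler_norml => /negP.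
  by rewrite -ltNge => /ltW.
have m_abs_gx : measurable_fun setT (fun y : R => `|g (x - y)|%:E).
  by apply/measurable_EFinP; apply: measurableT_comp.
have supnorm_ge0 : 0 <= supnorm f.
  exact: le_trans (normr_le_supnorm 0 R0_ge0 cf sf).
apply: (@le_lt_trans _ _
  (\int[lebesgue_measure]_(y in D) ((supnorm f)%:E * `|g (x - y)|%:E))%E).
  apply: ge0_le_integral => //.
  - by apply/measurable_EFinP; apply: measurableT_comp => //; exact: measurable_funTS.
  - by apply: emeasurable_funM => //; exact: measurable_funTS.
  - move=> y _; rewrite normrM EFinM lee_wpmul2r // lee_fin.
    exact: (normr_le_supnorm _ R0_ge0 cf sf).
rewrite ge0_integralZl //; last exact: measurable_funTS.
have -> : D = (fun y : R => x - y) @^-1` `[x - R0, x + R0]%classic.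
  by rewrite /D; apply/seteqP; split => y /=; rewrite !in_itv /= => /andP[? ?];
    apply/andP; split; lra.
rewrite (@ge0_integral_reflect R x _ (fun z => `|g z|%:E)) //; last first.
  by apply/measurable_EFinP; apply: measurableT_comp => //; exact: measurable_funTS.
have := lig _ (fun _ _ => I) (@segment_compact R (x - R0) (x + R0)).
rewrite -ge0_fin_numE ?integral_ge0 // => /fineK <-.
by rewrite -EFinM ltry.
Qed.

Lemma Rintegral_perturb_le (R : realType) (F k : R -> R) (A : set R) (C r : R) :
  lebesgue_measure.-integrable setT (EFin \o F) -> measurable_fun setT k ->
  measurable A -> (lebesgue_measure A <= r%:E)%E -> 0 <= C ->
  (forall y, `|k y| <= C * \1_A y) ->
  Rintegral lebesgue_measure setT (fun y => F y + k y) -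
  Rintegral lebesgue_measure setT F <= C * r.
Proof.
move=> iF mk mA hA C0 hk.
have int_k_le : (\int[lebesgue_measure]_(y in setT) `|(k y)%:E| <= (C * r)%:E)%E.
  apply: (@le_trans _ _ (\int[lebesgue_measure]_(y in setT) (C%:E * (\1_A y)%:E))%E).
    apply: ge0_le_integral => //.
    - by apply: measurableT_comp => //; exact/measurable_EFinP.
    - by apply: emeasurable_funM => //; apply/measurable_EFinP; exact: measurable_indic.
    - by move=> y _ /=; rewrite -EFinM lee_fin.
  rewrite ge0_integralZl //; last by apply/measurable_EFinP; exact: measurable_indic.
  by rewrite integral_indic // setIT EFinM lee_wpmul2l // lee_fin.
have ik : lebesgue_measure.-integrable setT (EFin \o k).
  apply/integrableP; split; first exact/measurable_EFinP.
  exact: le_lt_trans int_k_le (ltry _).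
rewrite RintegralD // addrAC subrr add0r.
rewrite /Rintegral -lee_fin fineK; last exact: integrable_fin_num.
apply: le_trans (lee_abs _) _; apply: le_trans int_k_le.
apply: le_abse_integral => //; exact/measurable_EFinP.
Qed.

Lemma lebesgue_measure_itv_le (R : realType) (a b r : R) (ba bb : bool) :
  0 <= r -> b - a <= r ->
  (lebesgue_measure [set` Interval (BSide ba a) (BSide bb b)] <= r%:E)%E.
Proof.
move=> r_ge0 ba_le; rewrite lebesgue_measure_itv /= lte_fin.
by case: ifP => _; rewrite ?lee_fin // -EFinB lee_fin.
Qed.

Lemma per_restr_shift (R : realType) (L : R) (u : R -> R) (n : int) (z : R) :
  0 < L -> n%:~R * L - L / 2 <= z -> z < n%:~R * L + L / 2 ->
  per_restr L u z = u (z - L * n%:~R).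
Proof.
move=> L_gt0 z_ge z_lt; rewrite /per_restr (@Num.Theory.floor_def _ _ n) //.
by rewrite intrD /= ler_pdivlMr // ltr_pdivrMr //; apply/andP; split; lra.
Qed.

Lemma per_restr_id (R : realType) (L : R) (u : R -> R) (z : R) :
  0 < L -> - (L / 2) <= z -> z < L / 2 -> per_restr L u z = u z.
Proof.
move=> L_gt0 z_ge z_lt.
by rewrite (@per_restr_shift _ _ _ 0) ?mulr0 ?subr0 // mul0r; lra.
Qed.

Lemma per_restr_sub_period (R : realType) (L : R) (u : R -> R) (z : R) :
  0 < L -> L / 2 <= z -> z < 3 * (L / 2) -> per_restr L u z = u (z - L).
Proof.
move=> L_gt0 z_ge z_lt.
by rewrite (@per_restr_shift _ _ _ 1) ?mulr1 // mul1r; lra.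
Qed.

Lemma per_restr_add_period (R : realType) (L : R) (u : R -> R) (z : R) :
  0 < L -> - (3 * (L / 2)) <= z -> z < - (L / 2) -> per_restr L u z = u (z + L).
Proof.
move=> L_gt0 z_ge z_lt.
by rewrite (@per_restr_shift _ _ _ (-1)) ?mulrN1 ?opprK // mulN1r; lra.
Qed.

Section TorusMinusLineConvolution.
Variables (R : realType) (R0 L : R) (f g : R -> R).
Hypotheses (R0_gt0 : 0 < R0) (R0_lt_halfL : R0 < L / 2).
Hypotheses (f_cont : continuous f) (f_supp : supp_in f R0).
Hypothesis g_locint : locally_integrable setT g.

(* [lra] does not use section hypotheses, hence the explicit [have]s below. *)
Let L_gt0 : 0 < L.
Proof. by have ? := R0_gt0; have ? := R0_lt_halfL; lra. Qed.

Let f_eq0 y : R0 <= `|y| -> f y = 0. Proof. exact: supp_in_eq0. Qed.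

Lemma torus_conv_Rintegral x : torus_conv L f g x =
  Rintegral lebesgue_measure setT (fun y => f y * per_restr L g (x - y)).
Proof.
have ? := R0_lt_halfL; have ? := L_gt0.
rewrite /torus_conv Rintegral_mkcond; apply: eq_Rintegral => y _.
rewrite /patch; case: ifPn => [|yD]; last first.
  rewrite f_eq0 ?mul0r //; apply: ltW.
  move: yD; rewrite notin_setE /= in_itv /= => /negP.
  by rewrite -ler_norml -ltNge => ?; lra.
rewrite mem_setE in_itv /= => /andP[y_ge y_le].
have [y_lt|y_eq] := ltP y (L / 2); first by rewrite per_restr_id.
rewrite per_restr_sub_period // ?f_eq0 ?mul0r //; rewrite ?ler_normr; lra.
Qed.

Lemma torus_conv_eq_line_conv x : - (L / 2) + R0 <= x -> x <= L / 2 - R0 ->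
  torus_conv L f g x = line_conv f g x.
Proof.
move=> x_ge x_le; have ? := L_gt0.
rewrite torus_conv_Rintegral; apply: eq_Rintegral => y _.
have [/f_eq0 ->|] := leP R0 `|y|; first by rewrite !mul0r.
by rewrite ltr_norml => /andP[y_gt y_lt]; rewrite per_restr_id //; lra.
Qed.

Lemma torus_conv_sub_line_conv_le x s B (A : set R) :
  measurable A -> (lebesgue_measure A <= R0%:E)%E -> 0 <= B ->
  (forall y, `|y| < R0 ->
    per_restr L g (x - y) = g (x - y) + \1_A y * (g (x - y + s) - g (x - y))) ->
  (forall y, `|y| < R0 -> A y -> `|g (x - y + s)| + `|g (x - y)| <= B) ->
  torus_conv L f g x - line_conv f g x <= R0 * supnorm f * B.
Proof.
move=> mA A_le B_ge0 per_eq g_le.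
have [mg _ _] := g_locint.
have supnorm_ge0 : 0 <= supnorm f.
  exact: le_trans (normr_le_supnorm 0 (ltW R0_gt0) f_cont f_supp).
pose k y := \1_A y * (f y * (g (x - y + s) - g (x - y))).
rewrite torus_conv_Rintegral /line_conv.
have -> : Rintegral lebesgue_measure setT (fun y => f y * per_restr L g (x - y)) =
    Rintegral lebesgue_measure setT (fun y => f y * g (x - y) + k y).
  apply: eq_Rintegral => y _; rewrite /k.
  have [/f_eq0 ->|/per_eq ->] := leP R0 `|y|; first by rewrite !mul0r mulr0 addr0.
  by ring.
rewrite (_ : R0 * supnorm f * B = supnorm f * B * R0); last by ring.
apply: (Rintegral_perturb_le _ _ mA A_le).
- exact: integrable_conv (ltW R0_gt0) f_cont f_supp g_locint.
- apply: measurable_funM; first exact: measurable_indic.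
  apply: measurable_funM; first exact: continuous_measurable_fun.
  apply: measurable_funB; apply: measurableT_comp mg _; last exact: measurable_reflect.
  exact: measurable_funD (measurable_reflect x) (measurable_cst s).
- exact: mulr_ge0.
- move=> y; rewrite /k normrM indicE.
  have [/f_eq0 ->|y_lt] := leP R0 `|y|; first by rewrite mul0r normr0 mulr0 !mulr_ge0.
  case: (boolP (y \in A)) => [/set_mem yA|_]; last by rewrite normr0 !mul0r mulr0.
  rewrite normr1 !mulr1 mul1r normrM; apply: ler_pM => //.
  - exact: normr_le_supnorm (ltW R0_gt0) f_cont f_supp.
  - exact: le_trans (ler_normB _ _) (g_le y y_lt yA).
Qed.

Section MonotoneTails.
Variable c : R.
Hypothesis g_incr : forall a b, a <= b -> b <= - c -> `|g a| <= `|g b|.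
Hypothesis g_decr : forall a b, c <= a -> a <= b -> `|g b| <= `|g a|.
Hypothesis c_lt : R0 + `|c| < L / 2.

Let c_le : c <= L / 2 - R0.
Proof. by have ? := ler_norm c; have ? := c_lt; lra. Qed.

Lemma torus_conv_sub_line_conv_left x : - (L / 2) <= x -> x < - (L / 2) + R0 ->
  torus_conv L f g x - line_conv f g x <=
  R0 * supnorm f * (`|g (- (L / 2))| + `|g (L / 2 - R0)|).
Proof.
move=> x_ge x_lt; have ? := c_le.
have ? := R0_gt0; have ? := R0_lt_halfL; have ? := L_gt0.
apply: (@torus_conv_sub_line_conv_le _ L _ `]x + L / 2, R0[).
- exact: measurable_itv.
- by apply: lebesgue_measure_itv_le; lra.
- by rewrite addr_ge0.
- move=> y; rewrite ltr_norml => /andP[y_gt y_lt].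
  rewrite indicE mem_setE in_itv /= y_lt andbT.
  have [y_shift|y_in] := ltP (x + L / 2) y.
    by rewrite per_restr_add_period /=; [ring | lra..].
  by rewrite per_restr_id /=; [ring | lra..].
- move=> y _; rewrite /= in_itv /= => /andP[y_shift y_lt].
  have : `|g (x - y + L)| <= `|g (L / 2 - R0)| by apply: g_decr; lra.
  have : `|g (x - y)| <= `|g (- (L / 2))| by apply: g_incr; lra.
  lra.
Qed.

Lemma torus_conv_sub_line_conv_right x : L / 2 - R0 < x -> x <= L / 2 ->
  torus_conv L f g x - line_conv f g x <=
  R0 * supnorm f * (`|g (L / 2)| + `|g (- (L / 2) + R0)|).
Proof.
move=> x_gt x_le; have ? := c_le.
have ? := R0_gt0; have ? := R0_lt_halfL; have ? := L_gt0.
apply: (@torus_conv_sub_line_conv_le _ (- L) _ `]- R0, x - L / 2]).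
- exact: measurable_itv.
- by apply: lebesgue_measure_itv_le; lra.
- by rewrite addr_ge0.
- move=> y; rewrite ltr_norml => /andP[y_gt y_lt].
  rewrite indicE mem_setE in_itv /= y_gt /=.
  have [y_shift|y_in] := leP y (x - L / 2).
    by rewrite per_restr_sub_period /=; [ring | lra..].
  by rewrite per_restr_id /=; [ring | lra..].
- move=> y _; rewrite /= in_itv /= => /andP[y_gt y_shift].
  have : `|g (x - y + - L)| <= `|g (- (L / 2) + R0)| by apply: g_incr; lra.
  have : `|g (x - y)| <= `|g (L / 2)| by apply: g_decr; lra.
  lra.
Qed.

End MonotoneTails.
End TorusMinusLineConvolution.

Theorem lemmaA2 (R : realType) (R0 : R) (f g : R -> R) :
  0 < R0 -> smooth f -> supp_in f R0 ->
  locally_integrable [set: R] g -> vanishes_monotonically g ->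
  let M := R0 * supnorm f in
  exists L0 : R, forall L : R, L0 < L ->
    let h := fun x => torus_conv L f g x - line_conv f g x in
    (forall x, - (L / 2) <= x -> x < - (L / 2) + R0 ->
        h x <= M * (`|g (- (L / 2))| + `|g (L / 2 - R0)|)) /\
    (forall x, - (L / 2) + R0 <= x -> x <= L / 2 - R0 -> h x = 0) /\
    (forall x, L / 2 - R0 < x -> x <= L / 2 ->
        h x <= M * (`|g (L / 2)| + `|g (- (L / 2) + R0)|)).
Proof.
move=> R0_gt0 /smooth_continuous f_cont f_supp g_locint.
move=> [_ [_ [c [g_incr g_decr]]]] M.
exists (2 * (R0 + `|c|)) => L L_gt h; rewrite {}/h {}/M.
have c_lt : R0 + `|c| < L / 2 by lra.
have R0_lt : R0 < L / 2 by have := normr_ge0 c; lra.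
split; [|split] => x x_ge x_le.
- exact: (torus_conv_sub_line_conv_left R0_gt0 R0_lt f_cont f_supp g_locint
    g_incr g_decr c_lt).
- by rewrite (torus_conv_eq_line_conv g R0_gt0 R0_lt f_cont f_supp) ?subrr.
- exact: (torus_conv_sub_line_conv_right R0_gt0 R0_lt f_cont f_supp g_locint
    g_incr g_decr c_lt).
Qed.
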